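(* Let $\alpha\in[0,1)$ and let $D$ be a digraph with $n\ge 2$ vertices, outdegrees $d_1^+,\dots,d_n^+$, and $a$ arcs, where $a\ge n\beta$ with $\beta=\max(1-\alpha,\ \alpha\, d^+_{\max})$ and $d^+_{\max}=\max_i d_i^+$. Then $$\|D_\alpha\|_*\le \frac an+\sqrt{(n-1)\Big[(1-\alpha)^2a+\alpha^2\sum_{i=1}^n (d_i^+)^2-\frac{a^2}{n^2}\Big]},$$ with equality if and only if $D$ satisfies one of the following: (a) $\alpha=0$ and $D$ is a direct sum (vertex-disjoint union) of directed cycles; (b) $D$ is $\frac an$-regular and $A_\alpha(D)$ has exactly two distinct (nonnegative) singular values, namely $\sigma_{1\alpha}=\frac an$ and $\sigma_{2\alpha}=\sigma_{3\alpha}=\dots=\sigma_{n\alpha}=\sigma$, where $$\sigma=\sqrt{\frac{\alpha^2\sum_{i=1}^n (d_i^+)^2+(1-\alpha)^2a-\frac{a^2}{n^2}}{n-1}}.$$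
   Context: Digraphs are simple: a finite vertex set and a set of arcs, which are ordered pairs of distinct vertices, with no parallel arcs (a pair of opposite arcs is allowed). A directed cycle of order $m\ge2$ has vertices $w_1,\dots,w_m$ and arcs $(w_1,w_2),\dots,(w_{m-1},w_m),(w_m,w_1)$. A digraph is $k$-regular if every vertex has outdegree $k$ and indegree $k$. For a digraph $D$ on vertices $v_1,\dots,v_n$, the adjacency matrix $A(D)=(a_{ij})$ has $a_{ij}=1$ if $(v_i,v_j)$ is an arc and $0$ otherwise; $d_i^+$ is the outdegree of $v_i$, and $\Delta^+(D)=\mathrm{diag}(d_1^+,\dots,d_n^+)$. For $\alpha\in[0,1)$, $A_\alpha(D)=\alpha\Delta^+(D)+(1-\alpha)A(D)$. Its singular values $\sigma_{1\alpha}\ge\sigma_{2\alpha}\ge\dots\ge\sigma_{n\alpha}\ge0$ are the nonnegative square roots of the eigenvalues of $A_\alpha(D)A_\alpha(D)^T$, and $\|D_\alpha\|_*=\sum_{i=1}^n\sigma_{i\alpha}$. *)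

From mathcomp Require Import all_boot all_order all_algebra.
From mathcomp Require Import reals.
Set Implicit Arguments. Unset Strict Implicit. Unset Printing Implicit Defensive.
Import Order.TTheory GRing.Theory Num.Theory.
Local Open Scope ring_scope.

(* A simple digraph on vertex set 'I_n: an arc relation D with no loops
   (no parallel arcs is automatic for a relation). *)
Definition loopless (n : nat) (D : rel 'I_n) : Prop := forall i, ~~ D i i.

Definition outdeg (n : nat) (D : rel 'I_n) (i : 'I_n) : nat := #|[set j | D i j]|.
Definition indeg (n : nat) (D : rel 'I_n) (j : 'I_n) : nat := #|[set i | D i j]|.

Definition narcs (n : nat) (D : rel 'I_n) : nat :=
  #|[set p : 'I_n * 'I_n | D p.1 p.2]|.

Definition maxoutdeg (n : nat) (D : rel 'I_n) : nat := \max_(i < n) outdeg D i.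

Definition adjmx (R : realType) (n : nat) (D : rel 'I_n) : 'M[R]_n :=
  \matrix_(i, j) (D i j)%:R.

Definition Aalpha (R : realType) (alpha : R) (n : nat) (D : rel 'I_n) : 'M[R]_n :=
  alpha *: diag_mx (\row_i ((outdeg D i)%:R : R)) + (1 - alpha) *: adjmx R D.

(* sigma lists the singular values of M in nonincreasing order, counted with
   multiplicity: they are nonnegative and their squares are exactly the
   eigenvalues (roots of the characteristic polynomial, with multiplicity)
   of M M^T. *)
Definition singular_values (R : realType) (n : nat) (M : 'M[R]_n)
  (sigma : 'I_n -> R) : Prop :=
  [/\ forall i, 0 <= sigma i,
      forall i j : 'I_n, (i <= j)%N -> sigma j <= sigma i
    & char_poly (M *m M^T) = \prod_(i < n) ('X - (sigma i ^+ 2)%:P)].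

(* D is a direct sum (vertex-disjoint union covering all vertices) of directed
   cycles: a family cs of cycles, each a duplicate-free vertex sequence of order
   >= 2, partitioning the vertex set, whose arcs are exactly the arcs of D
   (arc (x, next c x) for x in the cycle c). *)
Definition direct_sum_of_cycles (n : nat) (D : rel 'I_n) : Prop :=
  exists cs : seq (seq 'I_n),
    [/\ all (fun c => (2 <= size c)%N) cs,
        perm_eq (flatten cs) (enum 'I_n)
      & forall i j, D i j = has (fun c => (i \in c) && (next c i == j)) cs].

From mathcomp Require Import all_boot all_order all_algebra.
From mathcomp Require Import perm reals.
From mathcomp Require Import ring lra.
From mathcomp Require complex.
Import Order.TTheory GRing.Theory Num.Theory.
Local Open Scope ring_scope.
Set Implicit Arguments. Unset Strict Implicit. Unset Printing Implicit Defensive.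

(* Let B = A_alpha A_alpha^T, whose eigenvalues are the squared singular values.
   Its trace is F = (1 - alpha)^2 a + alpha^2 sum_i (d_i^+)^2, and the Rayleigh
   quotient of the all-ones vector, combined with Cauchy-Schwarz on the column sums
   of A_alpha (which add up to a), gives sigma_1 >= a/n.  Cauchy-Schwarz on the other
   singular values gives sum_i sigma_i <= sigma_1 + sqrt((n - 1)(F - sigma_1^2)); the
   hypothesis a >= n beta means F <= n (a/n)^2, which makes the right-hand side
   decreasing in sigma_1 >= a/n.  At equality sigma_1 = a/n, so the all-ones vector
   is an extremal eigenvector of B: the column sums are all a/n and D is regular.  If
   moreover all singular values are equal, each diagonal entry of B attains the
   common eigenvalue, which forces alpha = 0 and 1-regularity, i.e. a union of
   cycles. *)

Section CauchySchwarzSum.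
Variables (R : realFieldType) (I : finType) (P : pred I) (x : I -> R).
Local Notation N := (#|P|%:R : R).
Local Notation S := (\sum_(i | P i) x i).

Lemma card_mul_sum_sqr_dev : (0 < #|P|)%N ->
  N * \sum_(i | P i) (x i - S / N) ^+ 2 = N * \sum_(i | P i) x i ^+ 2 - S ^+ 2.
Proof.
move=> P0; have N0 : N != 0 by rewrite pnatr_eq0 -lt0n.
under eq_bigr => i _ do rewrite sqrrB.
rewrite big_split sumrB /= sumr_const.
by rewrite sumrMnl -mulr_suml -[_ *+ 2]mulr_natr -[_ *+ #|P|]mulr_natr; field.
Qed.

Lemma cauchy_schwarz_sum :
  S ^+ 2 <= N * \sum_(i | P i) x i ^+ 2 ?= iff [forall (i | P i), x i == S / N].
Proof.
have [P0 | P0] := posnP #|P|.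
  have noP i : P i = false by apply/negbTE/negP => Pi; rewrite (cardD1x Pi) in P0.
  by rewrite !big_pred0 // expr0n mulr0; apply/leif_refl/forall_inP => i; rewrite noP.
rewrite -[S ^+ 2]add0r -leifBRL -card_mul_sum_sqr_dev //; split.
  by rewrite mulr_ge0 ?sumr_ge0 // => i _; rewrite sqr_ge0.
rewrite eq_sym mulf_eq0 pnatr_eq0 eqn0Ngt P0 /= psumr_eq0 => [|i _]; last exact: sqr_ge0.
apply/allP/forall_inP => [h i Pi | h i _]; last first.
  by apply/implyP => Pi; rewrite sqrf_eq0 subr_eq0 h.
by move: (h i (mem_index_enum i)); rewrite Pi sqrf_eq0 subr_eq0.
Qed.
End CauchySchwarzSum.

Section SqrtBounds.
Variable R : rcfType.

Lemma leif_sqrt (x y : R) C : 0 <= x -> x ^+ 2 <= y ?= iff C -> x <= Num.sqrt y ?= iff C.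
Proof.
move=> x0 [le_xy eq_xy]; have y0 : 0 <= y := le_trans (sqr_ge0 x) le_xy.
rewrite -[x]ger0_norm // -sqrtr_sqr; split; first by rewrite ler_sqrt.
by rewrite eqr_sqrt ?sqr_ge0.
Qed.

Lemma add_sqrt_leif (m k x F : R) : 1 <= m -> 0 <= k <= x -> x ^+ 2 <= F ->
  F <= (m + 1) * k ^+ 2 ->
  x + Num.sqrt (m * (F - x ^+ 2)) <= k + Num.sqrt (m * (F - k ^+ 2)) ?= iff (x == k).
Proof.
move=> m1 /andP[k0 kx] xF Fk; apply/leifP.
have [-> | xk] := eqVneq x k; first by rewrite eqxx.
have ltkx : k < x by rewrite lt_def xk kx.
have k2x2 : k ^+ 2 < x ^+ 2 by nra.
set P := Num.sqrt (m * (F - k ^+ 2)); set Q := Num.sqrt (m * (F - x ^+ 2)).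
have P2 : P ^+ 2 = m * (F - k ^+ 2) by rewrite sqr_sqrtr // mulr_ge0 //; lra.
have Q2 : Q ^+ 2 = m * (F - x ^+ 2) by rewrite sqr_sqrtr // mulr_ge0 //; lra.
have P0 : 0 <= P := sqrtr_ge0 _.
have Q0 : 0 <= Q := sqrtr_ge0 _.
have Pmk : P <= m * k by rewrite -ler_sqr ?nnegrE ?mulr_ge0 //; nra.
have QP : Q < P by rewrite -ltr_sqr ?nnegrE //; nra.
have key : (P + Q) * (P - Q - (x - k)) = (x - k) * (m * (x + k) - P - Q).
  have -> : (P + Q) * (P - Q - (x - k)) = P ^+ 2 - Q ^+ 2 - (x - k) * (P + Q) by ring.
  by rewrite P2 Q2; ring.
have mkx : m * k < m * x by rewrite ltr_pM2l //; lra.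
have : 0 < (P + Q) * (P - Q - (x - k)) by rewrite key mulr_gt0 //; lra.
rewrite pmulr_rgt0; lra.
Qed.

Lemma sum_le_top_add_sqrt (I : finType) (i0 : I) (x : I -> R) (k F : R) :
  (1 < #|I|)%N -> (forall i, 0 <= x i) -> 0 <= k <= x i0 ->
  \sum_i x i ^+ 2 = F -> F <= #|I|%:R * k ^+ 2 ->
  let m := #|I|%:R - 1 in
  \sum_i x i <= k + Num.sqrt (m * (F - k ^+ 2))
    ?= iff (x i0 == k) && [forall (i | i != i0), x i == Num.sqrt ((F - k ^+ 2) / m)].
Proof.
move=> I2 x0 k_x0 sumx2 Fk m.
have cardC : #|predC1 i0|%:R = m by rewrite cardC1 -subn1 natrB // ltnW.
have m1 : 1 <= m by rewrite /m lerBrDr -(natrD R 1 1) ler_nat.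
have sum_const c (f : R -> R) : (forall i, i != i0 -> x i = c) ->
    \sum_(i | i != i0) f (x i) = m * f c.
  by move=> h; rewrite (eq_bigr (fun=> f c)) => [|i /h ->//]; rewrite sumr_const -cardC mulr_natl.
set S := \sum_(i | i != i0) x i.
have sumE : \sum_i x i = x i0 + S by rewrite (bigD1 i0).
have sqE : \sum_(i | i != i0) x i ^+ 2 = F - x i0 ^+ 2.
  by rewrite -sumx2 [in RHS](bigD1 i0) //= addrAC subrr add0r.
have rest_le : S <= Num.sqrt (m * (F - x i0 ^+ 2)) ?= iff [forall (i | i != i0), x i == S / m].
  apply: leif_sqrt; first exact: sumr_ge0 => i _.
  by rewrite -sqE -cardC; apply: cauchy_schwarz_sum.
have x0F : x i0 ^+ 2 <= F by rewrite -subr_ge0 -sqE sumr_ge0 // => i _; apply: sqr_ge0.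
have top_refl : x i0 <= x i0 ?= iff true by apply/leif_refl.
have Fmk : F <= (m + 1) * k ^+ 2 by rewrite subrK.
have top_le := add_sqrt_leif m1 k_x0 x0F Fmk.
rewrite sumE; suff -> : (x i0 == k) && [forall (i | i != i0), x i == Num.sqrt ((F - k ^+ 2) / m)]
    = (true && [forall (i | i != i0), x i == S / m]) && (x i0 == k).
  exact: leif_trans (leifD top_refl rest_le) top_le.
have m0 : 0 < m by lra.
have [x0k | _] := eqVneq (x i0) k; rewrite ?andbF // andbT /=.
apply/forall_inP/forall_inP => h i ne_i; apply/eqP.
  have hc j : j != i0 -> x j = Num.sqrt ((F - k ^+ 2) / m) by move/h/eqP.
  by rewrite /S (sum_const _ (fun y => y) hc) [m * _]mulrC mulfK ?gt_eqF // hc.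
have hc j : j != i0 -> x j = S / m by move/h/eqP.
have e : m * (S / m) ^+ 2 = F - k ^+ 2 by rewrite -x0k -sqE (sum_const _ (fun y => y ^+ 2) hc).
have S0 : 0 <= S / m by rewrite divr_ge0 ?sumr_ge0 // ltW.
by rewrite hc // -[S / m]ger0_norm // -sqrtr_sqr -e [m * _]mulrC mulfK ?gt_eqF.
Qed.
End SqrtBounds.

Definition qform (R : pzRingType) n (C : 'M[R]_n) (v : 'rV[R]_n) : R :=
  (v *m C *m v^T) 0 0.

Section QuadraticForms.
Variables (R : realFieldType) (n : nat).
Implicit Types (C : 'M[R]_n) (u v : 'rV[R]_n).

Lemma qform1 v : qform 1%:M v = \sum_j v 0 j ^+ 2.
Proof. by rewrite /qform mulmx1 mxE; apply: eq_bigr => j _; rewrite mxE expr2. Qed.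

Lemma qform1_ge0 v : 0 <= qform 1%:M v.
Proof. by rewrite qform1 sumr_ge0 // => j _; rewrite sqr_ge0. Qed.

Lemma qform1_eq0 v : (qform 1%:M v == 0) = (v == 0).
Proof.
rewrite qform1 psumr_eq0 => [|j _]; last exact: sqr_ge0.
apply/allP/eqP => [h | -> j _]; last by rewrite mxE /= sqrf_eq0.
by apply/rowP => j; rewrite mxE; apply/eqP; rewrite -sqrf_eq0; exact: h _ (mem_index_enum j).
Qed.

Lemma qform_scalar_sub (t : R) C v : qform (t%:M - C) v = t * qform 1%:M v - qform C v.
Proof. by rewrite /qform mulmxBr mulmxBl mul_mx_scalar mulmx1 -scalemxAl !mxE. Qed.

Lemma qform_delta C i : qform C (delta_mx 0 i) = C i i.
Proof. by rewrite /qform -rowE trmx_delta -colE !mxE. Qed.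

Lemma qformDZ C u v (r : R) : C^T = C ->
  qform C (u + r *: v) = qform C u + 2 * r * (u *m C *m v^T) 0 0 + r ^+ 2 * qform C v.
Proof.
move=> Csym; have vCu : (v *m C *m u^T) 0 0 = (u *m C *m v^T) 0 0.
  rewrite -[in RHS](trmxK (u *m C *m v^T)) [in RHS]mxE.
  by rewrite !trmx_mul trmxK Csym mulmxA.
have addE (A B : 'M[R]_1) : (A + B) 0 0 = A 0 0 + B 0 0 by rewrite mxE.
have scaleE (a : R) (A : 'M[R]_1) : (a *: A) 0 0 = a * A 0 0 by rewrite mxE.
rewrite /qform linearD linearZ /= mulmxDl mulmxDr !mulmxDl -!scalemxAl -!scalemxAr.
by rewrite !addE !scaleE vCu; ring.
Qed.

(* Along the line [u + r (u C)] the form equals [2 r |u C|^2 + r^2 q], which is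
   negative for small [r < 0] unless [u C = 0]. *)
Lemma psd_qform_eq0 C u : C^T = C -> (forall v, 0 <= qform C v) ->
  qform C u = 0 -> u *m C = 0.
Proof.
move=> Csym psd u0; set y := u *m C.
set N := qform 1%:M y; set q := qform C y.
have NE : (u *m C *m y^T) 0 0 = N by rewrite /N /qform mulmx1.
have q0 : 0 <= q := psd y.
have q1 : 0 < q + 1 by rewrite ltr_wpDl.
have := psd (u + (- N / (q + 1)) *: y); rewrite qformDZ // u0 NE -/q.
have -> : 0 + 2 * (- N / (q + 1)) * N + (- N / (q + 1)) ^+ 2 * q
    = - (N ^+ 2 * (q + 2)) / (q + 1) ^+ 2 by field; rewrite gt_eqF.
rewrite pmulr_lge0 ?invr_gt0 ?exprn_gt0 // => h.
have N0 : N = 0 by have := qform1_ge0 y; nra.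
by apply/eqP; rewrite -qform1_eq0 -/N N0.
Qed.
End QuadraticForms.

Section CharPolyRoots.
Variables (R : comNzRingType) (n : nat) (B : 'M[R]_n) (lam : 'I_n -> R).
Hypothesis charB : char_poly B = \prod_(i < n) ('X - (lam i)%:P).

Lemma char_poly_roots_sum : (0 < n)%N -> \sum_i lam i = \tr B.
Proof.
move=> n0; set s := [seq lam i | i <- index_enum 'I_n].
have size_s : size s = n by rewrite size_map -[index_enum _]enumT -cardT card_ord.
apply: oppr_inj; rewrite -char_poly_trace // charB -(big_map lam xpredT (fun x => 'X - x%:P)).
by rewrite -/s -[in n.-1]size_s coefPn_prod_XsubC ?size_s -?lt0n // big_map.
Qed.
End CharPolyRoots.

Lemma char_poly_roots_mem (R : idomainType) n (B : 'M[R]_n) (lam : 'I_n -> R) x :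
  char_poly B = \prod_(i < n) ('X - (lam i)%:P) ->
  root (char_poly B) x = (x \in [seq lam i | i <- index_enum 'I_n]).
Proof. by move->; rewrite -(big_map lam xpredT (fun x => 'X - x%:P)) root_prod_XsubC. Qed.

Lemma scalar_char_poly_roots (R : idomainType) n (c : R) (lam : 'I_n -> R) :
  char_poly (c%:M : 'M[R]_n) = \prod_(i < n) ('X - (lam i)%:P) -> forall i, lam i = c.
Proof.
move=> charc i; pose const_c (j : 'I_n) := c.
have charc' : char_poly (c%:M : 'M[R]_n) = \prod_(j < n) ('X - (const_c j)%:P).
  by rewrite char_poly_trig ?scalar_mx_is_trig //; apply: eq_bigr => j _; rewrite mxE eqxx.
have := char_poly_roots_mem (lam i) charc'.
by rewrite (char_poly_roots_mem _ charc) map_f ?mem_index_enum // => /esym/mapP[j _ ->].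
Qed.

Section Spectral.
Local Open Scope sesquilinear_scope.

Lemma normalmx_spectral_diag_eigenvalue (F : numClosedFieldType) n (A : 'M[F]_n) :
  A \is normalmx -> forall i, eigenvalue A (spectral_diag A 0 i).
Proof.
move=> Anormal i; have := orthomx_spectralP Anormal.
set P := spectralmx A; set d := spectral_diag A => AE.
have PPt : P *m P^t* = 1%:M by apply/unitarymxP/spectral_unitarymx.
apply/eigenvalueP; exists (row i P).
  rewrite -row_mul {1}AE invmx_unitary ?spectral_unitarymx // !mulmxA PPt mul1mx mul_diag_mx.
  by apply/rowP => j; rewrite !mxE.
apply/eqP => Pi0; have := congr1 (fun M => M *m P^t*) Pi0.
rewrite /= -row_mul PPt mul0mx => /rowP /(_ i); rewrite !mxE eqxx /= => /eqP.
by rewrite oner_eq0.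
Qed.

Section Rayleigh.
Import complex.
Variables (R : rcfType) (n : nat) (B : 'M[R]_n) (lam : 'I_n -> R) (t : R).
Hypotheses (Bsym : B^T = B) (charB : char_poly B = \prod_(i < n) ('X - (lam i)%:P))
  (lam_le : forall i, lam i <= t).
Local Notation toC := (complex.real_complex R).

Lemma conj_real_complex (x : R) : (toC x)^* = toC x.
Proof. by apply/CrealP/complex.complex_realP; exists x. Qed.

Lemma map_trmxC_real_complex m p (A : 'M[R]_(m, p)) : (map_mx toC A)^t* = map_mx toC A^T.
Proof. by apply/matrixP => i j; rewrite !mxE conj_real_complex. Qed.

(* In a unitary eigenbasis of the complexification of [B], the two forms become
   [\sum_j |w_j|^2 d_j] and [\sum_j |w_j|^2], where the [d_j] are eigenvalues. *)
Lemma qform_le_max_eigen v : qform B v <= t * qform 1%:M v.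
Proof.
set BC := map_mx toC B.
have BCnormal : BC \is normalmx.
  by rewrite qualifE /BC map_trmxC_real_complex Bsym.
have := orthomx_spectralP BCnormal.
set P := spectralmx BC; set d := spectral_diag BC => BCE.
have PiE : invmx P = P^t* by apply/invmx_unitary/spectral_unitarymx.
have PtP : P^t* *m P = 1%:M by rewrite -PiE mulVmx ?spectral_unit.
have d_le j : d 0 j <= toC t.
  have := normalmx_spectral_diag_eigenvalue BCnormal j.
  rewrite eigenvalue_root_char /BC -map_char_poly charB rmorph_prod /=.
  under eq_bigr => i _ do rewrite map_polyXsubC.
  rewrite -(big_map (toC \o lam) xpredT (fun x => 'X - x%:P)) root_prod_XsubC.
  by case/mapP => i _ ->; rewrite complex.lecR.
set w := map_mx toC v *m P^t*.
have wE : P *m (map_mx toC v)^t* = w^t* by rewrite trmx_mul map_mxM trmxCK.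
have qformC X : toC (qform X v) = (map_mx toC v *m map_mx toC X *m (map_mx toC v)^t*) 0 0.
  by rewrite map_trmxC_real_complex -!map_mxM [RHS]mxE.
have e1 : toC (qform B v) = \sum_j w 0 j * d 0 j * (w 0 j)^*.
  rewrite qformC -/BC {1}BCE PiE -!mulmxA wE !mulmxA -/w mxE.
  by apply: eq_bigr => j _; rewrite mul_mx_diag !mxE.
have e2 : toC (qform 1%:M v) = \sum_j w 0 j * (w 0 j)^*.
  rewrite qformC map_mx1 mulmx1 -{1}[map_mx toC v]mulmx1 -PtP !mulmxA -/w -mulmxA wE mxE.
  by apply: eq_bigr => j _; rewrite !mxE.
rewrite -complex.lecR rmorphM /= e1 e2 mulr_sumr; apply: ler_sum => j _.
by rewrite mulrAC [toC t * _]mulrC ler_wpM2l ?mul_conjC_ge0.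
Qed.

Lemma qform_eq_max_eigen v : qform B v = t * qform 1%:M v -> v *m B = t *: v.
Proof.
move=> eq_t; have sym : (t%:M - B)^T = t%:M - B by rewrite linearB /= tr_scalar_mx Bsym.
have psd w : 0 <= qform (t%:M - B) w.
  by rewrite qform_scalar_sub subr_ge0 qform_le_max_eigen.
have zero : qform (t%:M - B) v = 0 by rewrite qform_scalar_sub eq_t subrr.
move/eqP: (psd_qform_eq0 sym psd zero).
by rewrite mulmxBr mul_mx_scalar subr_eq0 => /eqP <-.
Qed.
End Rayleigh.
End Spectral.

Section FlattenUniq.
Variable T : eqType.
Implicit Type cs : seq (seq T).

Lemma flatten_uniq_mem cs c : uniq (flatten cs) -> c \in cs -> uniq c.
Proof.
elim: cs => [//|c' cs IH] /=; rewrite cat_uniq inE => /and3P[uc' _ ucs].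
by case/orP => [/eqP-> | /IH]; last exact.
Qed.

Lemma flatten_uniq_disjoint cs c1 c2 x : uniq (flatten cs) ->
  c1 \in cs -> c2 \in cs -> x \in c1 -> x \in c2 -> c1 = c2.
Proof.
elim: cs => [//|c cs IH] /=; rewrite cat_uniq => /and3P[_ /hasPn notin ucs].
have notin_c c' : c' \in cs -> x \in c' -> x \notin c.
  by move=> c'cs xc'; apply: notin; apply/flattenP; exists c'.
rewrite !inE => /orP[/eqP-> | c1cs] /orP[/eqP-> | c2cs] xc1 xc2 //.
- by rewrite (negbTE (notin_c _ c2cs xc2)) in xc1.
- by rewrite (negbTE (notin_c _ c1cs xc1)) in xc2.
- exact: IH.
Qed.

Lemma uniq_flatten cs : uniq cs -> all uniq cs ->
  (forall c1 c2 x, c1 \in cs -> c2 \in cs -> x \in c1 -> x \in c2 -> c1 = c2) ->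
  uniq (flatten cs).
Proof.
elim: cs => [//|c cs IH] /= /andP[ccs ucs] /andP[uc acs] disj.
rewrite cat_uniq uc IH //=; last first.
  by move=> c1 c2 x c1cs c2cs; apply: disj; rewrite inE ?c1cs ?c2cs orbT.
rewrite andbT; apply/hasPn => x /flattenP[c' c'cs xc']; apply/negP => xc.
have ec : c = c' by apply: (disj c c' x); rewrite ?inE ?eqxx ?c'cs ?orbT.
by rewrite ec c'cs in ccs.
Qed.
End FlattenUniq.

Lemma perm_cycle_decomposition (T : finType) (s : {perm T}) : (forall x, s x != x) ->
  exists cs : seq (seq T),
    [/\ all (fun c => (2 <= size c)%N) cs, perm_eq (flatten cs) (enum T)
      & forall i j, (s i == j) = has (fun c => (i \in c) && (next c i == j)) cs].
Proof.
move=> s_nofix; have csym : connect_sym (frel s) by move=> x y; apply/fconnect_sym/perm_inj.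
have cycle_s x : fcycle s (orbit s x) by apply/cycle_orbit/perm_inj.
have orbit_froot x : x \in orbit s (froot s x) by rewrite -fconnect_orbit csym connect_root.
pose cs := undup [seq orbit s (froot s x) | x <- enum T].
have csP c : c \in cs -> exists x, c = orbit s (froot s x).
  by rewrite mem_undup => /mapP[x _ ->]; exists x.
have orbit_cs x : orbit s (froot s x) \in cs.
  by rewrite mem_undup; apply/mapP; exists x; rewrite ?mem_enum.
have disj c1 c2 x : c1 \in cs -> c2 \in cs -> x \in c1 -> x \in c2 -> c1 = c2.
  move=> /csP[y1 ->] /csP[y2 ->].
  rewrite -!fconnect_orbit => /(fingraph.rootP csym) e1 /(fingraph.rootP csym) e2.
  by rewrite -[froot s y1](root_root csym) e1 -e2 root_root.
exists cs; split.
- apply/allP => c /csP[y ->]; rewrite size_orbit ltn_neqAle order_gt0 andbT.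
  apply/eqP => /esym o1; have := cycle_s (froot s y); rewrite /orbit o1 /= andbT.
  by rewrite (negbTE (s_nofix _)).
- apply: uniq_perm => [||x]; rewrite ?enum_uniq ?mem_enum //.
    apply: uniq_flatten disj; first exact: undup_uniq.
    by apply/allP => c /csP[y ->]; apply: orbit_uniq.
  by apply/flattenP; exists (orbit s (froot s x)).
- move=> i j; apply/eqP/hasP => [<- | [c /csP[y ->] /andP[iy /eqP <-]]].
    exists (orbit s (froot s i)) => //.
    by rewrite orbit_froot (nextE (cycle_s _) (orbit_froot i)) eqxx.
  by rewrite (nextE (cycle_s _) iy).
Qed.

Section PermutationDigraphs.
Variables (n : nat) (D : rel 'I_n).

Lemma direct_sum_of_cycles_perm :
  direct_sum_of_cycles D -> exists s : {perm 'I_n}, forall i j, D i j = (s i == j).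
Proof.
case=> cs [_ pe DE]; have ucs : uniq (flatten cs) by rewrite (perm_uniq pe) enum_uniq.
have cycle_of x : {c | c \in cs & x \in c}.
  apply: sig2_eqW; have : x \in flatten cs by rewrite (perm_mem pe) mem_enum.
  by case/flattenP => c; exists c.
pose c x := s2val (cycle_of x).
have c_cs x : c x \in cs := s2valP (cycle_of x).
have x_c x : x \in c x := s2valP' (cycle_of x).
have same_c x c' : c' \in cs -> x \in c' -> c' = c x.
  by move=> c'cs xc'; apply: flatten_uniq_disjoint ucs c'cs (c_cs x) xc' (x_c x).
pose f x := next (c x) x.
have f_inj : injective f.
  move=> x y fxy; have cxy : c x = c y.
    apply: (flatten_uniq_disjoint ucs (c_cs x) (c_cs y) (_ : f x \in c x)).
      by rewrite mem_next x_c.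
    by rewrite fxy mem_next x_c.
  by move: fxy; rewrite /f cxy => /(can_inj (prev_next (flatten_uniq_mem ucs (c_cs y)))).
exists (perm f_inj) => i j; rewrite permE DE; apply/hasP/eqP => [[c' c'cs /andP[ic' /eqP <-]] | <-].
  by rewrite /f (same_c i c').
by exists (c i); rewrite ?c_cs ?x_c ?eqxx.
Qed.

Lemma perm_direct_sum_of_cycles (s : {perm 'I_n}) :
  loopless D -> (forall i j, D i j = (s i == j)) -> direct_sum_of_cycles D.
Proof.
move=> noloop DE; have s_nofix x : s x != x by rewrite -DE noloop.
have [cs [size_cs pe csE]] := perm_cycle_decomposition s_nofix.
by exists cs; split=> // i j; rewrite DE csE.
Qed.

Lemma perm_degrees (s : {perm 'I_n}) :
  (forall i j, D i j = (s i == j)) -> forall i, outdeg D i = 1 /\ indeg D i = 1.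
Proof.
move=> DE i; rewrite /outdeg /indeg; split.
  by rewrite (_ : [set j | D i j] = [set s i]) ?cards1 //; apply/setP => j; rewrite !inE DE eq_sym.
rewrite (_ : [set j | D j i] = [set (s^-1)%g i]) ?cards1 //; apply/setP => j.
by rewrite !inE DE; apply/eqP/eqP => [<- | ->]; rewrite ?permK ?permKV.
Qed.

Lemma degree1_perm : (forall i, outdeg D i = 1 /\ indeg D i = 1) ->
  exists s : {perm 'I_n}, forall i j, D i j = (s i == j).
Proof.
move=> deg1.
have out1 i : {j | [set j | D i j] = [set j]} by apply/sig_eqW/cards1P/eqP; exact: (deg1 i).1.
have in1 j : exists i, [set i | D i j] = [set i] by apply/cards1P/eqP; exact: (deg1 j).2.
pose f i := sval (out1 i).
have DE i j : D i j = (f i == j).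
  by move/setP/(_ j): (svalP (out1 i)); rewrite !inE eq_sym => ->.
have f_inj : injective f.
  move=> x y fxy; have [z /setP Ez] := in1 (f x).
  by move: (Ez x) (Ez y); rewrite !inE !DE fxy eqxx => /esym/eqP-> /esym/eqP->.
by exists (perm f_inj) => i j; rewrite permE.
Qed.
End PermutationDigraphs.

Lemma natr_card_set (R : pzSemiRingType) (T : finType) (P : pred T) :
  (#|[set x | P x]|%:R : R) = \sum_x (P x)%:R.
Proof. by rewrite -sum1dep_card natr_sum big_mkcond; apply: eq_bigr => x _; case: (P x). Qed.

Section OnesVector.
Variables (R : realFieldType) (n : nat) (M : 'M[R]_n).
Local Notation ones := (const_mx 1 : 'rV[R]_n).

Lemma ones_mul_col_sum j : (ones *m M) 0 j = \sum_i M i j.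
Proof. by rewrite mxE; apply: eq_bigr => i _; rewrite mxE mul1r. Qed.

Lemma qform_gram_ones : qform (M *m M^T) ones = \sum_j (\sum_i M i j) ^+ 2.
Proof.
rewrite /qform !mulmxA -mulmxA -trmx_mul mxE; apply: eq_bigr => j _.
by rewrite [_^T _ _]mxE -expr2 ones_mul_col_sum.
Qed.

Lemma qform1_ones : qform 1%:M ones = n%:R.
Proof. by rewrite qform1 (eq_bigr (fun=> 1)) => [|j _]; rewrite ?sumr_const ?card_ord // mxE expr1n. Qed.

Lemma ones_mul_gram_row_sum (c : R) : (forall j, \sum_i M i j = c) ->
  forall i, (ones *m (M *m M^T)) 0 i = c * \sum_j M i j.
Proof.
move=> colsum i; rewrite mulmxA mxE mulr_sumr; apply: eq_bigr => j _.
by rewrite ones_mul_col_sum colsum mxE.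
Qed.
End OnesVector.

Section AalphaMatrix.
Variables (R : realType) (alpha : R) (n : nat) (D : rel 'I_n).
Local Notation A := (Aalpha alpha D).
Local Notation d i := ((outdeg D i)%:R : R).
Local Notation e i := ((indeg D i)%:R : R).

Lemma outdegE i : d i = \sum_j (D i j)%:R.
Proof. exact: natr_card_set. Qed.

Lemma indegE j : e j = \sum_i (D i j)%:R.
Proof. exact: natr_card_set. Qed.

Lemma narcs_sum_outdeg : ((narcs D)%:R : R) = \sum_i d i.
Proof.
rewrite /narcs natr_card_set -(pair_bigA _ (fun i j => ((D i j)%:R : R))) /=.
by apply: eq_bigr => i _; rewrite outdegE.
Qed.

Lemma narcs_sum_indeg : ((narcs D)%:R : R) = \sum_j e j.
Proof.
rewrite narcs_sum_outdeg (eq_bigr _ (fun i _ => outdegE i)) exchange_big.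
by apply: eq_bigr => j _; rewrite indegE.
Qed.

Lemma AalphaE i j : A i j = alpha * d i * (i == j)%:R + (1 - alpha) * (D i j)%:R.
Proof. by rewrite !mxE -mulrA mulr_natr. Qed.

Lemma Aalpha_row_sum i : \sum_j A i j = d i.
Proof.
rewrite (eq_bigr _ (fun j _ => AalphaE i j)) big_split /= -!mulr_sumr -outdegE.
rewrite (bigD1 i) //= eqxx big1 ?addr0 => [|j /negbTE]; last by rewrite eq_sym => ->.
by rewrite /= mulr1; ring.
Qed.

Lemma Aalpha_col_sum j : \sum_i A i j = alpha * d j + (1 - alpha) * e j.
Proof.
rewrite (eq_bigr _ (fun i _ => AalphaE i j)) big_split /= -!mulr_sumr -indegE.
rewrite (bigD1 j) //= eqxx big1 ?addr0 => [|i /negbTE ->]; last by rewrite mulr0.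
by rewrite /= mulr1.
Qed.

Lemma sum_Aalpha_col_sum : \sum_j (alpha * d j + (1 - alpha) * e j) = (narcs D)%:R.
Proof. by rewrite big_split /= -!mulr_sumr -narcs_sum_outdeg -narcs_sum_indeg; ring. Qed.

Lemma Aalpha_gram_diag i : loopless D ->
  (A *m A^T) i i = alpha ^+ 2 * d i ^+ 2 + (1 - alpha) ^+ 2 * d i.
Proof.
move=> noloop; rewrite mxE.
have termE j : A i j * A^T j i
    = alpha ^+ 2 * d i ^+ 2 * (i == j)%:R + (1 - alpha) ^+ 2 * (D i j)%:R.
  rewrite [A^T _ _]mxE !AalphaE; have [<- | _] := eqVneq i j; first by rewrite (negbTE (noloop i)) /=; ring.
  by case: (D i j) => /=; ring.
rewrite (eq_bigr _ (fun j _ => termE j)) big_split /= -!mulr_sumr -outdegE.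
rewrite (bigD1 i) //= eqxx big1 ?addr0 => [|j /negbTE]; last by rewrite eq_sym => ->.
by rewrite /= mulr1.
Qed.

Lemma Aalpha_gram_trace : loopless D ->
  \tr (A *m A^T) = alpha ^+ 2 * \sum_i d i ^+ 2 + (1 - alpha) ^+ 2 * (narcs D)%:R.
Proof.
move=> noloop; rewrite /mxtrace (eq_bigr _ (fun i _ => Aalpha_gram_diag i noloop)).
by rewrite big_split /= -!mulr_sumr narcs_sum_outdeg.
Qed.

Lemma Aalpha0_perm_gram (s : {perm 'I_n}) : alpha = 0 ->
  (forall i j, D i j = (s i == j)) -> A *m A^T = 1%:M.
Proof.
move=> alpha0 DE; have AE l m : A l m = (s l == m)%:R.
  by rewrite AalphaE alpha0 DE !mul0r add0r subr0 mul1r.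
apply/matrixP => i j; rewrite [RHS]mxE mxE.
under eq_bigr => l _ do rewrite [A^T _ _]mxE !AE.
rewrite (bigD1 (s i)) //= eqxx big1 ?addr0 => [|l /negbTE]; last by rewrite eq_sym => ->; rewrite mulr0n mul0r.
by rewrite mul1r (inj_eq perm_inj) eq_sym.
Qed.
End AalphaMatrix.

Section SingularValues.
Variables (R : realType) (n : nat) (M : 'M[R]_n) (sigma : 'I_n -> R) (i0 : 'I_n).
Hypotheses (svM : singular_values M sigma) (i0_first : val i0 = 0%N).
Local Notation B := (M *m M^T).
Local Notation ones := (const_mx 1 : 'rV[R]_n).

Lemma sv_ge0 i : 0 <= sigma i.
Proof. by case: svM. Qed.

Lemma sv_le_top i : sigma i <= sigma i0.
Proof. by case: svM => _ dec _; apply: dec; rewrite i0_first. Qed.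

Lemma sv_sqr_sum : (0 < n)%N -> \sum_i sigma i ^+ 2 = \tr B.
Proof. by case: svM => _ _ charB; apply: char_poly_roots_sum charB. Qed.

Lemma gram_sym : B^T = B.
Proof. by rewrite trmx_mul trmxK. Qed.

Lemma sqr_sv_le_top i : sigma i ^+ 2 <= sigma i0 ^+ 2.
Proof. by rewrite ler_sqr ?nnegrE ?sv_ge0 ?sv_le_top. Qed.

Lemma qform_gram_le v : qform B v <= sigma i0 ^+ 2 * qform 1%:M v.
Proof. by case: svM => _ _ charB; apply: qform_le_max_eigen gram_sym charB sqr_sv_le_top v. Qed.

Lemma qform_gram_eq v : qform B v = sigma i0 ^+ 2 * qform 1%:M v -> v *m B = sigma i0 ^+ 2 *: v.
Proof. by case: svM => _ _ charB; apply: qform_eq_max_eigen gram_sym charB sqr_sv_le_top v. Qed.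

Lemma col_sums_sqr_le : (\sum_j \sum_i M i j) ^+ 2 <= (n%:R * sigma i0) ^+ 2.
Proof.
have [cs _] := cauchy_schwarz_sum xpredT (fun j => \sum_i M i j).
have := qform_gram_le ones; rewrite qform_gram_ones qform1_ones card_ord in cs *.
move=> ray; apply: le_trans cs _; rewrite exprMn expr2 -mulrA ler_wpM2l //.
by rewrite mulrC.
Qed.

Lemma col_sums_sqr_eq : (\sum_j \sum_i M i j) ^+ 2 = (n%:R * sigma i0) ^+ 2 ->
  (forall j, \sum_i M i j = (\sum_j \sum_i M i j) / n%:R) /\ ones *m B = sigma i0 ^+ 2 *: ones.
Proof.
move=> eq_top; have [cs_le cs_eq] := cauchy_schwarz_sum xpredT (fun j => \sum_i M i j).
have ray := qform_gram_le ones; rewrite qform_gram_ones qform1_ones card_ord in cs_le cs_eq ray.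
have n0 : 0 < n%:R :> R by rewrite ltr0n (leq_ltn_trans _ (ltn_ord i0)).
have gram_eq : \sum_j (\sum_i M i j) ^+ 2 = sigma i0 ^+ 2 * n%:R.
  apply/eqP; rewrite eq_le ray -(ler_pM2l n0) /=.
  have -> : n%:R * (sigma i0 ^+ 2 * n%:R) = (n%:R * sigma i0) ^+ 2 by ring.
  by rewrite -eq_top.
split; last by apply: qform_gram_eq; rewrite qform_gram_ones qform1_ones.
move=> j; apply/eqP; move: j isT; apply/forall_inP; rewrite -cs_eq gram_eq eq_top.
by apply/eqP; ring.
Qed.
End SingularValues.

Section Theorem3p3.
Variables (R : realType) (alpha : R) (n : nat) (D : rel 'I_n) (sigma : 'I_n -> R) (i0 : 'I_n).
Hypotheses (alpha_ge0 : 0 <= alpha) (alpha_lt1 : alpha < 1) (n_ge2 : (2 <= n)%N)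
  (noloop : loopless D) (svA : singular_values (Aalpha alpha D) sigma) (i0_first : val i0 = 0%N).
Local Notation A := (Aalpha alpha D).
Local Notation a := ((narcs D)%:R : R).
Local Notation nR := (n%:R : R).
Local Notation d i := ((outdeg D i)%:R : R).
Local Notation e i := ((indeg D i)%:R : R).
Local Notation sumsq := (\sum_(i < n) d i ^+ 2).
Local Notation F := ((1 - alpha) ^+ 2 * a + alpha ^+ 2 * sumsq).
Local Notation k := (a / nR).
Local Notation rest_sv :=
  (Num.sqrt ((alpha ^+ 2 * sumsq + (1 - alpha) ^+ 2 * a - a ^+ 2 / nR ^+ 2) / (nR - 1))).
Hypothesis beta_le : nR * Num.max (1 - alpha) (alpha * (maxoutdeg D)%:R) <= a.

Lemma nR_gt0 : 0 < nR.
Proof. by rewrite ltr0n ltnW. Qed.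

Lemma narcs_gt0 : 0 < a.
Proof.
have n0 := nR_gt0.
apply: lt_le_trans beta_le; apply: (@lt_le_trans _ _ (nR * (1 - alpha))).
  by rewrite mulr_gt0 // subr_gt0.
by rewrite ler_pM2l // le_max lexx.
Qed.

Lemma avg_deg_gt0 : 0 < k.
Proof. exact: divr_gt0 narcs_gt0 nR_gt0. Qed.

Lemma sum_Aalpha : \sum_j \sum_i A i j = a.
Proof. by rewrite (eq_bigr _ (fun j _ => Aalpha_col_sum alpha D j)) sum_Aalpha_col_sum. Qed.

Lemma sv_sqr_sum_Aalpha : \sum_i sigma i ^+ 2 = F.
Proof. by rewrite (sv_sqr_sum svA (ltnW n_ge2)) Aalpha_gram_trace //; ring. Qed.

Lemma gram_trace_le : F <= nR * k ^+ 2.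
Proof.
move: beta_le; set dmax : R := (maxoutdeg D)%:R.
set beta := Num.max (1 - alpha) (alpha * dmax) => nbeta_le.
have beta1 : 1 - alpha <= beta by rewrite le_max lexx.
have betad : alpha * dmax <= beta by rewrite le_max lexx orbT.
have sumsq_le : sumsq <= dmax * a.
  rewrite narcs_sum_outdeg mulr_sumr ler_sum // => i _; rewrite expr2 ler_wpM2r //.
  by rewrite /dmax ler_nat; exact: (@leq_bigmax _ (outdeg D) i).
have a0 := narcs_gt0; have n0 := nR_gt0.
have beta_a : beta * a <= nR * k ^+ 2.
  have -> : nR * k ^+ 2 = a * a / nR by field; lra.
  by rewrite ler_pdivlMr; nra.
have h1 : (1 - alpha) ^+ 2 * a <= (1 - alpha) * beta * a.
  rewrite expr2 -!mulrA; apply: ler_wpM2l; first by rewrite subr_ge0 ltW.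
  by apply: ler_wpM2r => //; apply: ltW.
have h2 : alpha ^+ 2 * sumsq <= alpha * beta * a.
  apply: le_trans (ler_wpM2l (sqr_ge0 alpha) sumsq_le) _.
  rewrite expr2 -!mulrA; apply: ler_wpM2l => //; rewrite !mulrA.
  by apply: ler_wpM2r; [apply: ltW | exact: betad].
lra.
Qed.

Lemma sv_top_ge_avg_deg : k <= sigma i0.
Proof.
have s0 := sv_ge0 svA i0; have n0 := nR_gt0; have a0 := narcs_gt0.
rewrite ler_pdivrMr // mulrC -ler_sqr ?nnegrE ?mulr_ge0 ?(ltW a0) ?(ltW n0) //.
by rewrite -sum_Aalpha (col_sums_sqr_le svA i0_first).
Qed.

Lemma sv_top_eq_avg_deg_regular : sigma i0 = k -> forall i, d i = k /\ e i = k.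
Proof.
move=> top; have top_eq : (\sum_j \sum_i A i j) ^+ 2 = (nR * sigma i0) ^+ 2.
  by rewrite sum_Aalpha top mulrC divfK // gt_eqF ?nR_gt0.
have [colE onesE] := col_sums_sqr_eq svA i0_first top_eq.
rewrite sum_Aalpha in colE; rewrite top in onesE.
have dE i : d i = k.
  have := congr1 (fun v : 'rV_n => v 0 i) onesE.
  rewrite /= (ones_mul_gram_row_sum colE) Aalpha_row_sum mxE [const_mx _ _ _]mxE mulr1 expr2.
  by apply: mulfI; rewrite gt_eqF ?avg_deg_gt0.
move=> i; split=> //; have := colE i; rewrite Aalpha_col_sum dE => colEi.
have alpha_neq1 : 1 - alpha != 0 by rewrite subr_eq0 gt_eqF.
by apply: (mulfI alpha_neq1); lra.
Qed.

Lemma flat_sv_cycles : (forall i, sigma i = k) -> alpha = 0 /\ direct_sum_of_cycles D.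
Proof.
move=> flat; have reg := sv_top_eq_avg_deg_regular (flat i0); set B := A *m A^T.
have diag_le i : B i i <= k ^+ 2.
  have := qform_gram_le svA i0_first (delta_mx 0 i).
  by rewrite !qform_delta flat [X in _ * X]mxE eqxx mulr1n mulr1.
have trace_eq : \sum_i B i i = nR * k ^+ 2.
  rewrite -/(mxtrace B) -(sv_sqr_sum svA (ltnW n_ge2)).
  under eq_bigr => i _ do rewrite flat.
  by rewrite sumr_const card_ord [RHS]mulr_natl.
have diag_eq : B i0 i0 = k ^+ 2.
  have sum0 : \sum_i (k ^+ 2 - B i i) = 0.
    by rewrite sumrB trace_eq sumr_const card_ord -[_ *+ n]mulr_natl subrr.
  by apply/eqP; rewrite eq_sym -subr_eq0 (psumr_eq0P _ sum0) // => i _; rewrite subr_ge0.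
rewrite Aalpha_gram_diag // (reg i0).1 in diag_eq.
have k1 : 1 <= k by rewrite -(reg i0).1 ler1n -(ltr0n R) (reg i0).1 avg_deg_gt0.
have factored : k * (1 - alpha) * (k * (1 + alpha) - (1 - alpha)) = 0.
  by rewrite -[RHS](subrr (k ^+ 2)) -[X in _ = _ - X]diag_eq; ring.
have [alpha0 k_eq1] : alpha = 0 /\ k = 1.
  have k_alpha_neq0 : k * (1 - alpha) != 0 by rewrite mulf_neq0 // gt_eqF ?avg_deg_gt0 ?subr_gt0.
  move/eqP: factored; rewrite mulf_eq0 (negbTE k_alpha_neq0) subr_eq0 => /eqP keq.
  have alpha0 : alpha = 0 by have := alpha_ge0; nra.
  by split=> //; move: keq; rewrite alpha0; lra.
have deg1 i : outdeg D i = 1 /\ indeg D i = 1.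
  by split; apply/eqP; rewrite -(pnatr_eq1 R) ?(reg i).1 ?(reg i).2 k_eq1.
have [p Dp] := degree1_perm deg1.
by split=> //; apply: perm_direct_sum_of_cycles noloop Dp.
Qed.

Lemma sv_profile_cases : sigma i0 = k -> (forall i, i != i0 -> sigma i = rest_sv) ->
  (alpha = 0 /\ direct_sum_of_cycles D) \/ ((forall i, d i = k /\ e i = k) /\ rest_sv != k).
Proof.
move=> top rest; have [rest_k | rest_neq_k] := eqVneq rest_sv k; last first.
  by right; split=> //; apply: sv_top_eq_avg_deg_regular.
by left; apply: flat_sv_cycles => i; case: (eqVneq i i0) => [-> | /rest ->].
Qed.

Lemma cycles_sv : alpha = 0 -> direct_sum_of_cycles D ->
  sigma i0 = k /\ forall i, i != i0 -> sigma i = rest_sv.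
Proof.
move=> alpha0 /direct_sum_of_cycles_perm[p Dp]; have deg := perm_degrees Dp.
have dE i : d i = 1 by rewrite (deg i).1.
have aE : a = nR by rewrite narcs_sum_outdeg (eq_bigr _ (fun i _ => dE i)) sumr_const card_ord.
have sumsqE : sumsq = nR.
  by rewrite (eq_bigr _ (fun i _ => congr1 (fun x => x ^+ 2) (dE i))) expr1n sumr_const card_ord.
have sigma1 i : sigma i = 1.
  case: svA => sv_ge0 _; rewrite (Aalpha0_perm_gram alpha0 Dp) => /scalar_char_poly_roots/(_ i)/eqP.
  by rewrite sqrf_eq1 => /orP[/eqP // | /eqP sv_eqN1]; have := sv_ge0 i; rewrite sv_eqN1 oppr_ge0 ler10.
have nR_neq0 : nR != 0 by rewrite gt_eqF ?nR_gt0.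
have nR1_neq0 : nR - 1 != 0 by rewrite subr_eq0 pnatr_eq1 gtn_eqF.
have rest1 : rest_sv = 1.
  by rewrite alpha0 sumsqE aE -[RHS]sqrtr1; congr Num.sqrt; field; rewrite nR1_neq0.
by split=> [|i _]; rewrite sigma1 ?rest1 // aE divff.
Qed.

Lemma sum_sv_leif : \sum_i sigma i
    <= k + Num.sqrt ((nR - 1) * ((1 - alpha) ^+ 2 * a + alpha ^+ 2 * sumsq - a ^+ 2 / nR ^+ 2))
    ?= iff (sigma i0 == k) && [forall (i | i != i0), sigma i == rest_sv].
Proof.
have k_sv : 0 <= k <= sigma i0 by rewrite sv_top_ge_avg_deg ltW ?avg_deg_gt0.
have card_gt1 : (1 < #|'I_n|)%N by rewrite card_ord.
have F_le : F <= #|'I_n|%:R * k ^+ 2 by rewrite card_ord gram_trace_le.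
have := sum_le_top_add_sqrt card_gt1 (sv_ge0 svA) k_sv sv_sqr_sum_Aalpha F_le.
by rewrite /= card_ord expr_div_n [alpha ^+ 2 * _ + _]addrC.
Qed.
End Theorem3p3.

Unset Implicit Arguments.

Theorem theorem3p3 (R : realType) (alpha : R) (n : nat) (D : rel 'I_n)
  (sigma : 'I_n -> R) :
  0 <= alpha -> alpha < 1 -> (2 <= n)%N -> loopless D ->
  singular_values (Aalpha alpha D) sigma ->
  let a : R := (narcs D)%:R in
  let nR : R := n%:R in
  let sumsq : R := \sum_(i < n) ((outdeg D i)%:R) ^+ 2 in
  let beta : R := Num.max (1 - alpha) (alpha * (maxoutdeg D)%:R) in
  nR * beta <= a ->
  let bound : R := a / nR + Num.sqrt ((nR - 1) *
      ((1 - alpha) ^+ 2 * a + alpha ^+ 2 * sumsq - a ^+ 2 / nR ^+ 2)) in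
  let s : R := Num.sqrt ((alpha ^+ 2 * sumsq + (1 - alpha) ^+ 2 * a
                          - a ^+ 2 / nR ^+ 2) / (nR - 1)) in
  \sum_(i < n) sigma i <= bound /\
  (\sum_(i < n) sigma i = bound <->
     (alpha = 0 /\ direct_sum_of_cycles D) \/
     ((forall i, (outdeg D i)%:R = a / nR /\ (indeg D i)%:R = a / nR) /\
      s != a / nR /\
      (forall i : 'I_n, val i = 0%N -> sigma i = a / nR) /\
      (forall i : 'I_n, val i <> 0%N -> sigma i = s))).
Proof.
move=> alpha_ge0 alpha_lt1 n_ge2 noloop svA a nR sumsq beta beta_le bound s.
pose i0 : 'I_n := Ordinal (ltnW n_ge2); have i0_first : val i0 = 0%N by [].
have [sum_le sum_eqE] := sum_sv_leif alpha_ge0 alpha_lt1 n_ge2 noloop svA i0_first beta_le.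
have cases := sv_profile_cases alpha_ge0 alpha_lt1 n_ge2 noloop svA i0_first beta_le.
have cycles := cycles_sv i0 n_ge2 svA.
have neq_i0 i : (i != i0) = (val i != 0%N) by [].
split=> //; split=> [/eqP | eq_cases].
  rewrite sum_eqE => /andP[/eqP top /forall_inP rest].
  have [cyc | [reg rest_neq_k]] := cases top (fun i ne => eqP (rest i ne)); first by left.
  right; do 3!split=> //; move=> i.
    by move=> vi; rewrite (_ : i = i0) //; apply: val_inj.
  by move/eqP; rewrite -neq_i0 => /rest/eqP.
apply/eqP; rewrite sum_eqE; have [top rest] : sigma i0 = a / nR /\ forall i, i != i0 -> sigma i = s.
  case: eq_cases => [[alpha0 dsc] | [_ [_ [top rest]]]]; first exact: cycles.
  by split=> [|i]; [exact: top | rewrite neq_i0 => /eqP; exact: rest].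
by rewrite top eqxx; apply/forall_inP => i /rest ->.
Qed.
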